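(* Assume (R) and (F), let $\alpha\in(0,\infty)^T$, let $u_t(x)=\frac{1}{\alpha_t}[1-\exp(-\alpha_tx)]$ for $t\in\mathbb{T}$, fix initial wealth $w\in\mathbb{R}$, and let $Z\in L^\infty$ have the representation $Z=\sum_{t=1}^T z_t1_{(t-1<\tau\le t)}+z_{T+1}1_{(T<\tau)}$. Then: (a) the indifference price is $H(Z)=\log h_0$; (b) the optimal intertemporal allocation $(X_t)\in\mathcal{A}(w+H(Z)-Z)$ of $w+H(Z)-Z$ (which satisfies $\sum_tE[u_t(\tilde X_t)]=U(w+H(Z)-Z)=U(w)$) is given by $X_1=\frac{B_1}{\alpha_1}\big[\beta_1(w+H(Z))-\beta_1z_1 1_{(0<\tau\le1)}-\beta_1\log h_1\,1_{(1<\tau)}\big]$ and, for $t=2,\dots,T$, $X_t=\frac{B_t}{\alpha_t}\Big[\beta_1(w+H(Z))-\sum_{k=1}^t\beta_kz_k1_{(k-1<\tau\le k)}-\beta_t\log h_t\,1_{(t<\tau)}+\sum_{k=1}^{t-1}\frac{\beta_{k+1}\beta_k}{\alpha_k}\log h_k\,1_{(k<\tau)}\Big]$.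
   Context: Let $T\ge1$, $\mathbb{T}=\{1,\dots,T\}$, and $(\Omega,\mathcal{F},P)$ a probability space carrying a random variable $\tau$ with $\tau(\omega)>0$ for all $\omega$ and $P(\tau=s)=0$ for all $s\in[0,\infty)$. Let $D_t=1_{(\tau\le t)}$ for $t=0,\dots,T$ and $\mathcal{H}_t=\sigma(D_s:s=0,\dots,t)$. Condition (F): the filtration is $\mathcal{F}_t=\mathcal{H}_t$; $L^\infty=L^\infty(\Omega,\mathcal{F}_T,P)$. Condition (R): the interest rates $r_t\ge0$ are deterministic; $B_0=1$, $B_t=\prod_{k=1}^t(1+r_k)$, $\tilde X_t=X_t/B_t$. For $W\in L^\infty$, $\mathcal{A}(W)$ is the set of adapted processes $(Y_t)_{t\in\mathbb{T}}$ with $Y_t\in L^\infty$ and $\sum_{t}\tilde Y_t=W$ a.s.; $U(W)=\sup\{\sum_tE[u_t(\tilde Y_t)]:(Y_t)\in\mathcal{A}(W)\}$; the indifference price $H(Z)$ is the real number with $U(w+H(Z)-Z)=U(w)$. Let $q_t=P(\tau\le t+1\mid\tau>t)$, $p_t=1-q_t$ ($t=0,\dots,T-1$). Define $\beta_t$ by $1/\beta_t=\sum_{k=t}^T1/\alpha_k$, and $h_T=e^{z_{T+1}}$, $h_{t-1}=\big[e^{\beta_tz_t}q_{t-1}+h_t^{\beta_t}p_{t-1}\big]^{1/\beta_t}$ for $t=1,\dots,T$. *)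

From Stdlib Require Import Reals Lra List.
Import ListNotations.
Open Scope R_scope.

Record ProbSpace := {
  Omega : Type;
  Fsig : (Omega -> Prop) -> Prop;
  Prob : (Omega -> Prop) -> R;
  Fsig_full : Fsig (fun _ => True);
  Fsig_compl : forall A, Fsig A -> Fsig (fun w => ~ A w);
  Fsig_union : forall A : nat -> Omega -> Prop,
      (forall n, Fsig (A n)) -> Fsig (fun w => exists n, A n w);
  Prob_nonneg : forall A, Fsig A -> 0 <= Prob A;
  Prob_full : Prob (fun _ => True) = 1;
  Prob_sigma_additive : forall A : nat -> Omega -> Prop,
      (forall n, Fsig (A n)) ->
      (forall m n w, m <> n -> A m w -> A n w -> False) ->
      infinite_sum (fun n => Prob (A n)) (Prob (fun w => exists n, A n w))
}.

Definition almost_surely (PS : ProbSpace) (Q : Omega PS -> Prop) : Prop :=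
  exists N, Fsig PS N /\ Prob PS N = 0 /\ forall w, ~ N w -> Q w.

(* finite sum  sum_{k=m}^{n} f k  (empty if n < m) *)
Definition sumR (m n : nat) (f : nat -> R) : R :=
  fold_right (fun k acc => f k + acc) 0 (seq m (S n - m)).

Definition Dind {O : Type} (tau : O -> R) (s : nat) (w : O) : R :=
  if Rle_dec (tau w) (INR s) then 1 else 0.

(* (D_0(w), ..., D_t(w)) as booleans: an H_t-measurable random variable is
   exactly a function of this history (Doob-Dynkin, finitely many indicators) *)
Definition hist {O : Type} (tau : O -> R) (t : nat) (w : O) : list bool :=
  map (fun s => if Rle_dec (tau w) (INR s) then true else false) (seq 0 (S t)).

Fixpoint Bacc (r : nat -> R) (t : nat) : R :=
  match t with O => 1 | S k => Bacc r k * (1 + r (S k)) end.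

Definition uexp (alpha : nat -> R) (t : nat) (x : R) : R :=
  / alpha t * (1 - exp (- alpha t * x)).

Definition bucket {O : Type} (tau : O -> R) (T k : nat) (w : O) : Prop :=
  if Nat.leb k T then INR (k - 1) < tau w <= INR k else INR T < tau w.

(* history of D_0..D_t on bucket k *)
Definition bucket_hist (k t : nat) : list bool :=
  map (fun s => Nat.leb k s) (seq 0 (S t)).

(* Expectation of f(Y) for an H_t-measurable Y = g(hist t), i.e. the integral
   of a simple function: sum over the (T+1) atoms of H_T. *)
Definition Expect_hist (PS : ProbSpace) (tau : Omega PS -> R) (T t : nat)
    (f : list bool -> R) : R :=
  sumR 1 (S T) (fun k => Prob PS (bucket tau T k) * f (bucket_hist k t)).

(* sum_t E[u_t(Y_t / B_t)] for the adapted process Y_t = g t (hist t) *)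
Definition value (PS : ProbSpace) (tau : Omega PS -> R) (T : nat)
    (r alpha : nat -> R) (g : nat -> list bool -> R) : R :=
  sumR 1 T (fun t => Expect_hist PS tau T t
                        (fun hb => uexp alpha t (g t hb / Bacc r t))).

(* The set {sum_t E[u_t(Y~_t)] : (Y_t) in A(W)}; U(W) is its supremum. *)
Definition attainable (PS : ProbSpace) (tau : Omega PS -> R) (T : nat)
    (r alpha : nat -> R) (W : Omega PS -> R) : R -> Prop :=
  fun v => exists g : nat -> list bool -> R,
    almost_surely PS (fun w => sumR 1 T (fun t => g t (hist tau t w) / Bacc r t) = W w)
    /\ v = value PS tau T r alpha g.

Definition U_is (PS : ProbSpace) (tau : Omega PS -> R) (T : nat)
    (r alpha : nat -> R) (W : Omega PS -> R) (u : R) : Prop :=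
  is_lub (attainable PS tau T r alpha W) u.

Definition qt (PS : ProbSpace) (tau : Omega PS -> R) (t : nat) : R :=
  Prob PS (fun w => INR t < tau w <= INR (S t)) / Prob PS (fun w => INR t < tau w).
Definition pt (PS : ProbSpace) (tau : Omega PS -> R) (t : nat) : R :=
  1 - qt PS tau t.

Definition beta (T : nat) (alpha : nat -> R) (t : nat) : R :=
  / sumR t T (fun k => / alpha k).

(* hrev n = h_{T-n} *)
Fixpoint hrev (PS : ProbSpace) (tau : Omega PS -> R) (T : nat) (alpha z : nat -> R)
    (n : nat) : R :=
  match n with
  | O => exp (z (S T))
  | S m => let t := (T - m)%nat in
      Rpower (exp (beta T alpha t * z t) * qt PS tau (t - 1)
              + Rpower (hrev PS tau T alpha z m) (beta T alpha t) * pt PS tau (t - 1))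
             (/ beta T alpha t)
  end.

Definition hseq (PS : ProbSpace) (tau : Omega PS -> R) (T : nat) (alpha z : nat -> R)
    (t : nat) : R := hrev PS tau T alpha z (T - t).

Definition Zclaim {O : Type} (tau : O -> R) (T : nat) (z : nat -> R) (w : O) : R :=
  sumR 1 T (fun t => z t * (Dind tau t w - Dind tau (t - 1) w))
  + z (S T) * (1 - Dind tau T w).

Definition Xopt (PS : ProbSpace) (tau : Omega PS -> R) (T : nat)
    (r alpha z : nat -> R) (w0 H : R) (t : nat) (w : Omega PS) : R :=
  let b := beta T alpha in
  let h := hseq PS tau T alpha z in
  Bacc r t / alpha t *
   ( b 1%nat * (w0 + H)
     - sumR 1 t (fun k => b k * z k * (Dind tau k w - Dind tau (k - 1) w))
     - b t * ln (h t) * (1 - Dind tau t w)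
     + sumR 1 (t - 1) (fun k => b (S k) * b k / alpha k * ln (h k) * (1 - Dind tau k w)) ).

From Stdlib Require Import Reals List Lra Lia Classical FunctionalExtensionality PropExtensionality.
Open Scope R_scope.

(* On the history filtration, tau only reveals which of the T+1 atoms
   {k-1 < tau <= k} (k <= T) or {T < tau} occurs, and before default all atoms
   look alike.  The candidate X gives alpha_t X~_t the value [opt_exponent] on each
   atom; these values meet the budget w + H - Z atom by atom, and the backward
   recursion defining h_t is exactly what makes the marginal utilities
   exp(-alpha_t X~_t) a martingale, with mean e^{-beta_1 x} h_0^{beta_1} for the
   capital x = w + H.  By concavity, any other allocation Y of the same budget gains
   at most sum_t E[u_t'(X~_t) (Y~_t - X~_t)], which the martingale property turns into
   E[u_T'(X~_T) sum_t (Y~_t - X~_t)] = 0.  Hence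
   U(x - Z) = (1 - e^{-beta_1 x} h_0^{beta_1}) / beta_1; for Z = 0 every h_t is 1,
   and comparing the two values gives H(Z) = log h_0. *)

Ltac ring_div := unfold Rdiv; ring.

Definition lsum (l : list nat) (f : nat -> R) : R := fold_right (fun k acc => f k + acc) 0 l.

Lemma lsum_app l1 l2 f : lsum (l1 ++ l2) f = lsum l1 f + lsum l2 f.
Proof. induction l1 as [|a l1 IH]; simpl; [lra | rewrite IH; lra]. Qed.

Lemma lsum_plus l f g : lsum l (fun k => f k + g k) = lsum l f + lsum l g.
Proof. induction l as [|a l IH]; simpl; [lra | rewrite IH; lra]. Qed.

Lemma lsum_scal l c f : lsum l (fun k => c * f k) = c * lsum l f.
Proof. induction l as [|a l IH]; simpl; [lra | rewrite IH; lra]. Qed.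

Lemma lsum_ext l f g : (forall k, In k l -> f k = g k) -> lsum l f = lsum l g.
Proof. induction l as [|a l IH]; simpl; intros H; auto. rewrite H, IH; auto. Qed.

Lemma lsum_le l f g : (forall k, In k l -> f k <= g k) -> lsum l f <= lsum l g.
Proof.
  induction l as [|a l IH]; simpl; intros H; [lra|].
  pose proof (IH (fun k hk => H k (or_intror hk))). pose proof (H a (or_introl eq_refl)). lra.
Qed.

Lemma lsum_exch l1 l2 F :
  lsum l1 (fun t => lsum l2 (fun k => F t k)) = lsum l2 (fun k => lsum l1 (fun t => F t k)).
Proof.
  induction l1 as [|a l1 IH]; simpl.
  - induction l2; simpl; lra.
  - rewrite IH, <- lsum_plus. reflexivity.
Qed.

Lemma sumR_lsum m n f : sumR m n f = lsum (seq m (S n - m)) f.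
Proof. reflexivity. Qed.

Lemma sumR_nil m n f : (n < m)%nat -> sumR m n f = 0.
Proof. intros; unfold sumR. replace (S n - m)%nat with 0%nat by lia. reflexivity. Qed.

Lemma sumR_cons m n f : (m <= n)%nat -> sumR m n f = f m + sumR (S m) n f.
Proof. intros; unfold sumR. replace (S n - m)%nat with (S (S n - S m)) by lia. reflexivity. Qed.

Lemma sumR_snoc m n f : (m <= S n)%nat -> sumR m (S n) f = sumR m n f + f (S n).
Proof.
  intros; rewrite !sumR_lsum. replace (S (S n) - m)%nat with (S (S n - m)) by lia.
  rewrite seq_S, lsum_app; cbn [lsum fold_right].
  replace (m + (S n - m))%nat with (S n) by lia. lra.
Qed.

Lemma sumR_ext m n f g : (forall k, (m <= k <= n)%nat -> f k = g k) -> sumR m n f = sumR m n g.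
Proof. intros H; apply lsum_ext; intros k Hk%in_seq; apply H; lia. Qed.

Lemma sumR_le m n f g : (forall k, (m <= k <= n)%nat -> f k <= g k) -> sumR m n f <= sumR m n g.
Proof. intros H; apply lsum_le; intros k Hk%in_seq; apply H; lia. Qed.

Lemma sumR_plus m n f g : sumR m n (fun k => f k + g k) = sumR m n f + sumR m n g.
Proof. apply lsum_plus. Qed.

Lemma sumR_scal m n c f : sumR m n (fun k => c * f k) = c * sumR m n f.
Proof. apply lsum_scal. Qed.

Lemma sumR_exch a b c d F :
  sumR a b (fun t => sumR c d (fun k => F t k)) = sumR c d (fun k => sumR a b (fun t => F t k)).
Proof. apply lsum_exch. Qed.

Lemma sumR_split m p n f :
  (m <= S p)%nat -> (p <= n)%nat -> sumR m n f = sumR m p f + sumR (S p) n f.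
Proof.
  intros Hm Hp; induction n as [|n IH].
  - replace p with 0%nat by lia. rewrite (sumR_nil 1 0) by lia. lra.
  - destruct (Nat.eq_dec p (S n)) as [->|].
    + rewrite (sumR_nil (S (S n))) by lia. lra.
    + rewrite sumR_snoc, IH, sumR_snoc by lia. lra.
Qed.

Lemma sumR_zero m n f : (forall k, (m <= k <= n)%nat -> f k = 0) -> sumR m n f = 0.
Proof.
  intros H. rewrite (sumR_ext _ _ _ (fun k => 0 * 0)), sumR_scal; [lra|].
  intros; rewrite H; auto; lra.
Qed.

Lemma sumR_nonneg m n f : (forall k, (m <= k <= n)%nat -> 0 <= f k) -> 0 <= sumR m n f.
Proof. intros H. rewrite <- (sumR_zero m n (fun _ => 0)) by auto. apply sumR_le; auto. Qed.

Section ProbabilitySpace.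
Variable PS : ProbSpace.

Lemma event_ext (A B : Omega PS -> Prop) : (forall w, A w <-> B w) -> A = B.
Proof.
  intros H; apply functional_extensionality; intros w; apply propositional_extensionality; auto.
Qed.

Lemma Fsig_ext A B : (forall w, A w <-> B w) -> Fsig PS A -> Fsig PS B.
Proof. intros H; rewrite (event_ext A B H); auto. Qed.

Lemma Prob_ext A B : (forall w, A w <-> B w) -> Prob PS A = Prob PS B.
Proof. intros H; rewrite (event_ext A B H); auto. Qed.

Lemma Fsig_empty : Fsig PS (fun _ => False).
Proof. apply (Fsig_ext (fun w => ~ True)); [tauto | apply Fsig_compl, Fsig_full]. Qed.

(* Countable additivity on the constant family [fun _ => False] forces the
   partial sums (n+1) p to converge, hence p = 0. *)
Lemma Prob_empty : Prob PS (fun _ => False) = 0.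
Proof.
  set (p := Prob PS (fun _ => False)).
  assert (Hsum := Prob_sigma_additive PS (fun _ _ => False) (fun _ => Fsig_empty)
                    (fun _ _ _ _ h _ => h)).
  cbv beta in Hsum. rewrite (Prob_ext (fun w => exists n : nat, False) (fun _ => False)) in Hsum
    by (intros; split; [intros [_ []] | tauto]).
  fold p in Hsum.
  assert (Hpartial : forall n, sum_f_R0 (fun _ => p) n = INR (S n) * p).
  { induction n as [|n IH]; simpl sum_f_R0; [simpl; lra | rewrite IH, (S_INR (S n)); lra]. }
  destruct (Req_dec p 0) as [|Hp]; auto. exfalso.
  assert (Habs : Rabs p > 0) by (apply Rabs_pos_lt; auto).
  destruct (Hsum (Rabs p / 2)) as [N HN]; [lra|].
  specialize (HN (S N) ltac:(lia)). rewrite Hpartial in HN. unfold Rdist in HN.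
  replace (INR (S (S N)) * p - p) with (INR (S N) * p) in HN by (rewrite (S_INR (S N)); ring).
  rewrite Rabs_mult, Rabs_right in HN by (apply Rle_ge, pos_INR).
  assert (1 <= INR (S N)) by (rewrite S_INR; generalize (pos_INR N); lra).
  nra.
Qed.

Lemma Fsig_or A B : Fsig PS A -> Fsig PS B -> Fsig PS (fun w => A w \/ B w).
Proof.
  intros HA HB.
  apply (Fsig_ext (fun w => exists n : nat, (match n with 0%nat => A | _ => B end) w)).
  - intros w; split; [intros [[|n] Hw]; auto|].
    intros [Hw|Hw]; [exists 0%nat | exists 1%nat]; auto.
  - apply Fsig_union. intros [|n]; auto.
Qed.

Lemma Fsig_and A B : Fsig PS A -> Fsig PS B -> Fsig PS (fun w => A w /\ B w).
Proof.
  intros HA HB. apply (Fsig_ext (fun w => ~ (~ A w \/ ~ B w))).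
  - intros w; split; [intros Hw; apply NNPP; tauto | tauto].
  - apply Fsig_compl, Fsig_or; apply Fsig_compl; auto.
Qed.

Lemma Prob_disjoint_or A B : Fsig PS A -> Fsig PS B -> (forall w, A w -> B w -> False) ->
  Prob PS (fun w => A w \/ B w) = Prob PS A + Prob PS B.
Proof.
  intros HA HB Hdisj.
  set (S := fun n : nat => match n with 0%nat => A | 1%nat => B | _ => fun _ => False end).
  assert (HS := Prob_sigma_additive PS S).
  rewrite (Prob_ext (fun w => exists n, S n w) (fun w => A w \/ B w)) in HS.
  2:{ intros w; split; [intros [[|[|n]] Hw]; simpl in Hw; tauto|].
      intros [Hw|Hw]; [exists 0%nat | exists 1%nat]; auto. }
  apply (uniqueness_sum (fun n => Prob PS (S n))).
  - apply HS.
    + intros [|[|n]]; simpl; auto. apply Fsig_empty.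
    + intros [|[|m]] [|[|n]] w Hmn H1 H2; simpl in *; try tauto; try lia; eauto.
  - intros eps Heps. exists 1%nat. intros n Hn. unfold Rdist.
    assert (Hpartial : sum_f_R0 (fun n => Prob PS (S n)) n = Prob PS A + Prob PS B).
    { induction n as [|n IH]; [lia|]. destruct (Nat.eq_dec n 0) as [->|]; [simpl; lra|].
      simpl sum_f_R0. rewrite IH by lia. destruct n; [lia|]. simpl. rewrite Prob_empty. lra. }
    rewrite Hpartial, Rminus_diag, Rabs_R0. lra.
Qed.

Lemma Prob_mono A B : Fsig PS A -> Fsig PS B -> (forall w, A w -> B w) -> Prob PS A <= Prob PS B.
Proof.
  intros HA HB Hsub.
  assert (HBA : Fsig PS (fun w => B w /\ ~ A w)) by (apply Fsig_and; [|apply Fsig_compl]; auto).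
  rewrite (Prob_ext B (fun w => A w \/ (B w /\ ~ A w))).
  2:{ intros w; split; [intros Hw; destruct (classic (A w)); auto | intros [Hw|[Hw _]]; auto]. }
  rewrite Prob_disjoint_or by (auto; tauto).
  pose proof (Prob_nonneg PS _ HBA). lra.
Qed.

Lemma almost_surely_everywhere (Q : Omega PS -> Prop) : (forall w, Q w) -> almost_surely PS Q.
Proof.
  intros HQ. exists (fun _ => False).
  split; [apply Fsig_empty | split; [apply Prob_empty | auto]].
Qed.

End ProbabilitySpace.

Lemma exists_integer_interval s n : 0 < s -> s <= INR n ->
  exists k, (1 <= k <= n)%nat /\ INR (k - 1) < s <= INR k.
Proof.
  intros Hs. induction n as [|n IH]; intros Hn; [simpl in Hn; lra|].
  destruct (Rle_dec s (INR n)) as [Hle|Hgt].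
  - destruct n as [|n]; [simpl in Hle; lra|].
    destruct (IH Hle) as [k [Hk Hint]]. exists k. split; [lia | exact Hint].
  - exists (S n). split; [lia|]. replace (S n - 1)%nat with n by lia. lra.
Qed.

Lemma nth_bucket_hist k t j : (j <= t)%nat -> nth j (bucket_hist k t) false = Nat.leb k j.
Proof.
  intros. unfold bucket_hist. rewrite nth_indep with (d' := Nat.leb k 0).
  - rewrite map_nth, seq_nth by lia. reflexivity.
  - rewrite length_map, length_seq. lia.
Qed.

Lemma bucket_hist_alive k k' t : (t < k)%nat -> (t < k')%nat -> bucket_hist k t = bucket_hist k' t.
Proof.
  intros. unfold bucket_hist. apply map_ext_in. intros s Hs%in_seq.
  destruct (Nat.leb_spec k s), (Nat.leb_spec k' s); reflexivity || lia.
Qed.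

Lemma nth_hist {O : Type} (tau : O -> R) t w j : (j <= t)%nat ->
  nth j (hist tau t w) false = (if Rle_dec (tau w) (INR j) then true else false).
Proof.
  intros. unfold hist.
  set (D := fun s => if Rle_dec (tau w) (INR s) then true else false).
  rewrite nth_indep with (d' := D 0%nat).
  - rewrite (map_nth D), seq_nth by lia. reflexivity.
  - rewrite length_map, length_seq. lia.
Qed.

Section Allocation.
Variable PS : ProbSpace.
Variable tau : Omega PS -> R.
Variable T : nat.
Variables alpha z : nat -> R.

Local Notation b := (beta T alpha).
Local Notation h := (hseq PS tau T alpha z).

(* Aggregate risk tolerance sum_{k=t}^T 1/alpha_k, so that beta_t = 1 / tolerance t. *)
Definition tolerance t := sumR t T (fun k => / alpha k).

(* The last sum in the formula for X_n (empty for n = 1). *)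
Definition drift n := sumR 1 (n - 1) (fun j => b (S j) * b j / alpha j * ln (h j)).

Lemma drift_S t : (1 <= t)%nat -> drift (S t) = drift t + b (S t) * b t / alpha t * ln (h t).
Proof.
  intros. unfold drift. replace (S t - 1)%nat with (S (t - 1)) by lia.
  rewrite sumR_snoc by lia. replace (S (t - 1)) with t by lia. reflexivity.
Qed.

(* [opt_exponent x t k] is alpha_t X~_t on the atom {k-1 < tau <= k} (or {T < tau}
   when k = T+1) for the capital x = w + H(Z): at time t default has occurred
   iff k <= t. *)
Definition opt_exponent x t k :=
  if Nat.leb k t then b 1 * x - b k * z k + drift k else b 1 * x - b t * ln (h t) + drift t.

Lemma opt_exponent_defaulted x t k : (k <= t)%nat -> opt_exponent x t k = b 1 * x - b k * z k + drift k.
Proof. intros. unfold opt_exponent. destruct (Nat.leb_spec k t); [reflexivity | lia]. Qed.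

Lemma opt_exponent_alive x t k : (t < k)%nat -> opt_exponent x t k = b 1 * x - b t * ln (h t) + drift t.
Proof. intros. unfold opt_exponent. destruct (Nat.leb_spec k t); [lia | reflexivity]. Qed.

(* The path (D_j)_j of the default indicator on the k-th atom. *)
Definition atom_path (k j : nat) : R := if Nat.leb k j then 1 else 0.

Lemma sum_increments_atom_path n k f : (1 <= k)%nat ->
  sumR 1 n (fun j => f j * (atom_path k j - atom_path k (j - 1))) = if Nat.leb k n then f k else 0.
Proof.
  intros Hk. induction n as [|n IH].
  - rewrite sumR_nil by lia. destruct k; [lia | reflexivity].
  - rewrite sumR_snoc, IH by lia. unfold atom_path. replace (S n - 1)%nat with n by lia.
    destruct (Nat.leb_spec k n), (Nat.leb_spec k (S n)); try lia; try lra.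
    replace k with (S n) by lia. lra.
Qed.

Lemma sum_survival_atom_path n k f : (1 <= k)%nat ->
  sumR 1 n (fun j => f j * (1 - atom_path k j)) = sumR 1 (Nat.min n (k - 1)) f.
Proof.
  intros Hk. induction n as [|n IH].
  - rewrite !sumR_nil by lia. reflexivity.
  - rewrite sumR_snoc, IH by lia. unfold atom_path. destruct (Nat.leb_spec k (S n)).
    + replace (Nat.min (S n) (k - 1)) with (Nat.min n (k - 1)) by lia. lra.
    + replace (Nat.min (S n) (k - 1)) with (S n) by lia. replace (Nat.min n (k - 1)) with n by lia.
      rewrite sumR_snoc by lia. lra.
Qed.

(* [Xopt] and [Zclaim] with the default indicators replaced by an arbitrary path D. *)
Definition alloc_path (r : nat -> R) x (D : nat -> R) t :=
  Bacc r t / alpha t *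
   ( b 1%nat * x
     - sumR 1 t (fun k => b k * z k * (D k - D (k - 1)%nat))
     - b t * ln (h t) * (1 - D t)
     + sumR 1 (t - 1) (fun k => b (S k) * b k / alpha k * ln (h k) * (1 - D k)) ).

Definition claim_path (D : nat -> R) :=
  sumR 1 T (fun t => z t * (D t - D (t - 1)%nat)) + z (S T) * (1 - D T).

Lemma alloc_path_ext r x D D' t :
  (forall j, (j <= t)%nat -> D j = D' j) -> alloc_path r x D t = alloc_path r x D' t.
Proof.
  intros HD. unfold alloc_path. rewrite HD by lia.
  rewrite (sumR_ext 1 t _ (fun k => b k * z k * (D' k - D' (k - 1)%nat)))
    by (intros; rewrite !HD by lia; reflexivity).
  rewrite (sumR_ext 1 (t - 1) _ (fun k => b (S k) * b k / alpha k * ln (h k) * (1 - D' k)))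
    by (intros; rewrite !HD by lia; reflexivity).
  reflexivity.
Qed.

Lemma claim_path_ext D D' : (forall j, (j <= T)%nat -> D j = D' j) -> claim_path D = claim_path D'.
Proof.
  intros HD. unfold claim_path. rewrite HD by lia.
  rewrite (sumR_ext 1 T _ (fun t => z t * (D' t - D' (t - 1)%nat)))
    by (intros; rewrite !HD by lia; reflexivity).
  reflexivity.
Qed.

Lemma alloc_atom_path r x t k : (1 <= k)%nat ->
  alloc_path r x (atom_path k) t = Bacc r t / alpha t * opt_exponent x t k.
Proof.
  intros Hk. unfold alloc_path, opt_exponent. rewrite sum_increments_atom_path by auto.
  rewrite (sum_survival_atom_path (t - 1) k (fun j => b (S j) * b j / alpha j * ln (h j))) by auto.
  unfold drift. unfold atom_path at 1. destruct (Nat.leb_spec k t).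
  - replace (Nat.min (t - 1) (k - 1)) with (k - 1)%nat by lia. ring_div.
  - replace (Nat.min (t - 1) (k - 1)) with (t - 1)%nat by lia. ring_div.
Qed.

Lemma claim_atom_path k : (1 <= k <= S T)%nat ->
  claim_path (atom_path k) = if Nat.leb k T then z k else z (S T).
Proof.
  intros Hk. unfold claim_path. rewrite sum_increments_atom_path by lia. unfold atom_path.
  destruct (Nat.leb_spec k T); lra.
Qed.

Hypothesis HT : (1 <= T)%nat.
Hypothesis Halpha : forall t, (1 <= t <= T)%nat -> 0 < alpha t.

Lemma tolerance_S t : (1 <= t <= T)%nat -> tolerance t = / alpha t + tolerance (S t).
Proof. intros; apply sumR_cons; lia. Qed.

Lemma tolerance_after_T : tolerance (S T) = 0.
Proof. apply sumR_nil; lia. Qed.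

Lemma tolerance_pos t : (1 <= t <= T)%nat -> 0 < tolerance t.
Proof.
  intros Ht. rewrite tolerance_S by lia.
  assert (0 < / alpha t) by (apply Rinv_0_lt_compat, Halpha; lia).
  assert (0 <= tolerance (S t)).
  { apply sumR_nonneg; intros; left; apply Rinv_0_lt_compat, Halpha; lia. }
  lra.
Qed.

Lemma beta_tolerance t : (1 <= t <= T)%nat -> b t * tolerance t = 1.
Proof. intros Ht. unfold beta. fold (tolerance t). field. generalize (tolerance_pos t Ht); lra. Qed.

Lemma beta_pos t : (1 <= t <= T)%nat -> 0 < b t.
Proof. intros. apply Rinv_0_lt_compat, tolerance_pos; auto. Qed.

Lemma beta_S t : (1 <= t < T)%nat -> b t + b (S t) * b t / alpha t = b (S t).
Proof.
  intros Ht. unfold beta. fold (tolerance t) (tolerance (S t)). rewrite (tolerance_S t) by lia.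
  assert (0 < alpha t) by (apply Halpha; lia).
  assert (0 < tolerance (S t)) by (apply tolerance_pos; lia).
  field. repeat split; try lra. nra.
Qed.

Lemma beta_T : b T = alpha T.
Proof.
  unfold beta. fold (tolerance T). rewrite tolerance_S, tolerance_after_T by lia.
  assert (0 < alpha T) by (apply Halpha; lia). field. lra.
Qed.

Lemma hseq_pos t : 0 < h t.
Proof. unfold hseq. destruct (T - t)%nat; simpl; [|unfold Rpower]; apply exp_pos. Qed.

Lemma ln_hseq_T : ln (h T) = z (S T).
Proof. unfold hseq. rewrite Nat.sub_diag. apply ln_exp. Qed.

Lemma hseq_S t : (t < T)%nat ->
  h t = Rpower (exp (b (S t) * z (S t)) * qt PS tau t
                + Rpower (h (S t)) (b (S t)) * pt PS tau t) (/ b (S t)).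
Proof.
  intros Ht. unfold hseq. replace (T - t)%nat with (S (T - S t)) by lia. simpl.
  replace (T - (T - S t))%nat with (S t) by lia. replace (S t - 1)%nat with t by lia. reflexivity.
Qed.

(* The drift terms are chosen so that they do not affect the budget before default. *)
Lemma drift_telescope n : (S n <= T)%nat ->
  sumR 1 n (fun t => / alpha t * (drift t - b t * ln (h t))) + tolerance (S n) * drift (S n) = 0.
Proof.
  induction n as [|n IH]; intros Hn.
  - rewrite sumR_nil by lia. unfold drift. simpl. rewrite sumR_nil by lia. ring.
  - rewrite <- (IH ltac:(lia)), sumR_snoc, (drift_S (S n)), (tolerance_S (S n)) by lia.
    assert (Hbt := beta_tolerance (S (S n)) ltac:(lia)).
    assert (0 < alpha (S n)) by (apply Halpha; lia).
    replace (tolerance (S (S n)) * (drift (S n) + b (S (S n)) * b (S n) / alpha (S n) * ln (h (S n))))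
      with (tolerance (S (S n)) * drift (S n)
            + (b (S (S n)) * tolerance (S (S n))) * (b (S n) / alpha (S n) * ln (h (S n))))
      by ring_div.
    rewrite Hbt. field. lra.
Qed.

Lemma sum_inv_alpha c : sumR 1 T (fun t => / alpha t * c) = tolerance 1 * c.
Proof.
  rewrite (sumR_ext _ _ _ (fun t => c * / alpha t)) by (intros; ring).
  rewrite sumR_scal. unfold tolerance. ring.
Qed.

Lemma sum_inv_alpha_beta1 x : sumR 1 T (fun t => / alpha t * (b 1 * x)) = x.
Proof.
  rewrite sum_inv_alpha, <- Rmult_assoc, Rmult_comm, (Rmult_comm _ (b 1)), beta_tolerance by lia.
  ring.
Qed.

Lemma opt_exponent_budget_default x k : (1 <= k <= T)%nat ->
  sumR 1 T (fun t => / alpha t * opt_exponent x t k) = x - z k.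
Proof.
  intros Hk. pose proof (sum_inv_alpha_beta1 x) as Hx.
  rewrite (sumR_split 1 (k - 1) T) in Hx |- * by lia. replace (S (k - 1)) with k in Hx |- * by lia.
  rewrite (sumR_ext 1 (k - 1) _
             (fun t => / alpha t * (b 1 * x) + / alpha t * (drift t - b t * ln (h t))))
    by (intros; rewrite opt_exponent_alive by lia; ring).
  rewrite (sumR_ext k T _ (fun t => / alpha t * (b 1 * x) + (drift k - b k * z k) * / alpha t))
    by (intros; rewrite opt_exponent_defaulted by lia; ring).
  rewrite !sumR_plus, sumR_scal. fold (tolerance k).
  assert (Htel := drift_telescope (k - 1) ltac:(lia)). replace (S (k - 1)) with k in Htel by lia.
  assert (Hbt := beta_tolerance k ltac:(lia)).
  replace ((drift k - b k * z k) * tolerance k)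
    with (tolerance k * drift k - (b k * tolerance k) * z k) by ring.
  rewrite Hbt. lra.
Qed.

Lemma opt_exponent_budget_survival x :
  sumR 1 T (fun t => / alpha t * opt_exponent x t (S T)) = x - z (S T).
Proof.
  rewrite (sumR_ext 1 T _ (fun t => / alpha t * (b 1 * x) + / alpha t * (drift t - b t * ln (h t))))
    by (intros; rewrite opt_exponent_alive by lia; ring).
  rewrite sumR_plus, sum_inv_alpha_beta1.
  rewrite (sumR_split 1 (T - 1) T) by lia. replace (S (T - 1)) with T by lia.
  rewrite (sumR_cons T T), (sumR_nil (S T) T) by lia.
  assert (Htel := drift_telescope (T - 1) ltac:(lia)). replace (S (T - 1)) with T in Htel by lia.
  rewrite (tolerance_S T), tolerance_after_T in Htel by lia. rewrite beta_T, ln_hseq_T.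
  assert (0 < alpha T) by (apply Halpha; lia).
  replace (/ alpha T * (drift T - alpha T * z (S T))) with (/ alpha T * drift T - z (S T))
    by (field; lra).
  lra.
Qed.

Lemma opt_exponent_budget x k : (1 <= k <= S T)%nat ->
  sumR 1 T (fun t => / alpha t * opt_exponent x t k) = x - claim_path (atom_path k).
Proof.
  intros Hk. rewrite claim_atom_path by auto. destruct (Nat.leb_spec k T).
  - apply opt_exponent_budget_default; lia.
  - replace k with (S T) by lia. apply opt_exponent_budget_survival.
Qed.

Hypothesis Hmeas : forall a, Fsig PS (fun w => tau w <= a).
Hypothesis Htau : forall w, 0 < tau w.

Definition atom_prob k := Prob PS (bucket tau T k).
Definition survival t := Prob PS (fun w => INR t < tau w).

Lemma Fsig_tau_gt a : Fsig PS (fun w => a < tau w).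
Proof.
  apply (Fsig_ext PS (fun w => ~ tau w <= a)); [intros w; split; intros; lra|].
  apply Fsig_compl, Hmeas.
Qed.

Lemma Fsig_bucket k : Fsig PS (bucket tau T k).
Proof.
  unfold bucket. destruct (Nat.leb k T); [apply Fsig_and, Hmeas|]; apply Fsig_tau_gt.
Qed.

Lemma atom_prob_nonneg k : 0 <= atom_prob k.
Proof. apply Prob_nonneg, Fsig_bucket. Qed.

Lemma survival_nonneg t : 0 <= survival t.
Proof. apply Prob_nonneg, Fsig_tau_gt. Qed.

Lemma atom_prob_S t : (t < T)%nat -> atom_prob (S t) = Prob PS (fun w => INR t < tau w <= INR (S t)).
Proof.
  intros Ht. apply Prob_ext. intros w. unfold bucket.
  destruct (Nat.leb_spec (S t) T); [|lia]. replace (S t - 1)%nat with t by lia. tauto.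
Qed.

Lemma atom_prob_after_T : atom_prob (S T) = survival T.
Proof.
  apply Prob_ext. intros w. unfold bucket.
  destruct (Nat.leb_spec (S T) T); [lia | tauto].
Qed.

Lemma survival_S t : (t < T)%nat -> survival t = atom_prob (S t) + survival (S t).
Proof.
  intros Ht. rewrite atom_prob_S by auto. unfold survival.
  assert (INR t < INR (S t)) by (apply lt_INR; lia).
  rewrite (Prob_ext PS (fun w => INR t < tau w)
             (fun w => (INR t < tau w <= INR (S t)) \/ INR (S t) < tau w)).
  - apply Prob_disjoint_or; [apply Fsig_and, Hmeas; apply Fsig_tau_gt | apply Fsig_tau_gt | intros; lra].
  - intros w. destruct (Rle_dec (tau w) (INR (S t))); split; intros Hw; try lra; tauto.
Qed.

Lemma survival_0 : survival 0 = 1.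
Proof.
  unfold survival. rewrite <- (Prob_full PS). apply Prob_ext.
  intros w; split; [auto | intros _; apply Htau].
Qed.

Lemma sum_atom_prob_after t : (t <= T)%nat -> sumR (S t) (S T) atom_prob = survival t.
Proof.
  remember (T - t)%nat as n eqn:Hn. revert t Hn. induction n as [|n IH]; intros t Hn Ht.
  - replace t with T by lia. rewrite sumR_cons, sumR_nil, atom_prob_after_T by lia. lra.
  - rewrite sumR_cons, (IH (S t)), (survival_S t) by lia. reflexivity.
Qed.

Lemma sum_atom_prob : sumR 1 (S T) atom_prob = 1.
Proof. rewrite sum_atom_prob_after by lia. apply survival_0. Qed.

Lemma hazard_survival t : (t < T)%nat ->
  qt PS tau t * survival t = atom_prob (S t) /\ pt PS tau t * survival t = survival (S t)
  /\ 0 <= qt PS tau t /\ 0 <= pt PS tau t.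
Proof.
  intros Ht. unfold pt, qt. rewrite <- atom_prob_S by auto. fold (survival t).
  pose proof (survival_S t Ht). pose proof (atom_prob_nonneg (S t)). pose proof (survival_nonneg (S t)).
  destruct (Req_dec (survival t) 0) as [E|E].
  (* conditioning on a null event: the junk value [x / 0 = 0] *)
  - assert (atom_prob (S t) = 0) as E' by lra.
    rewrite E, E'. unfold Rdiv. rewrite Rinv_0. repeat split; lra.
  - assert (0 < survival t) by (generalize (survival_nonneg t); lra).
    assert (atom_prob (S t) / survival t <= 1).
    { apply Rmult_le_reg_r with (survival t); auto. field_simplify; lra. }
    repeat split.
    + field; auto.
    + unfold Rminus. rewrite Rmult_plus_distr_r. field_simplify; auto. lra.
    + unfold Rdiv. apply Rmult_le_pos; auto. left; apply Rinv_0_lt_compat; auto.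
    + lra.
Qed.

(* The backward recursion for h, multiplied out by the survival probabilities. *)
Lemma hseq_survival t : (t < T)%nat ->
  Rpower (h t) (b (S t)) * survival t
  = atom_prob (S t) * exp (b (S t) * z (S t)) + Rpower (h (S t)) (b (S t)) * survival (S t).
Proof.
  intros Ht. rewrite (hseq_S t Ht). destruct (hazard_survival t Ht) as [Eq [Ep [Hq Hp]]].
  assert (Hb : 0 < b (S t)) by (apply beta_pos; lia).
  set (e := exp (b (S t) * z (S t))). set (H := Rpower (h (S t)) (b (S t))).
  assert (0 < e) by apply exp_pos. assert (0 < H) by (unfold H, Rpower; apply exp_pos).
  assert (Hmix : 0 < e * qt PS tau t + H * pt PS tau t).
  { assert (0 <= H * pt PS tau t) by (apply Rmult_le_pos; lra).
    destruct (Rle_lt_or_eq_dec 0 (qt PS tau t) Hq) as [Hq'|Hq'].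
    - assert (0 < e * qt PS tau t) by (apply Rmult_lt_0_compat; lra). lra.
    - unfold pt in *. rewrite <- Hq' in *. lra. }
  rewrite Rpower_mult. replace (/ b (S t) * b (S t)) with 1 by (field; lra).
  rewrite Rpower_1 by auto.
  transitivity (e * (qt PS tau t * survival t) + H * (pt PS tau t * survival t)); [ring|].
  rewrite Eq, Ep. ring.
Qed.

(* Marginal utility u_t'(X~_t) of the candidate on the k-th atom. *)
Definition marginal x t k := exp (- opt_exponent x t k).

Lemma marginal_defaulted x t k : (k <= t)%nat -> marginal x t k = marginal x (S t) k.
Proof. intros. unfold marginal. rewrite !opt_exponent_defaulted by lia. reflexivity. Qed.

Lemma marginal_alive x t k : (t < k)%nat ->
  marginal x t k = exp (- (b 1 * x) - drift t) * Rpower (h t) (b t).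
Proof.
  intros. unfold marginal, Rpower. rewrite opt_exponent_alive, <- exp_plus by lia.
  f_equal. ring.
Qed.

Lemma marginal_alive_next x t k : (1 <= t < T)%nat -> (t < k)%nat ->
  marginal x t k = exp (- (b 1 * x) - drift (S t)) * Rpower (h t) (b (S t)).
Proof.
  intros. rewrite marginal_alive by auto. unfold Rpower.
  rewrite <- (beta_S t), (drift_S t), <- !exp_plus by lia. f_equal. ring_div.
Qed.

Lemma marginal_at_default x t : marginal x t t = exp (- (b 1 * x) - drift t) * exp (b t * z t).
Proof.
  unfold marginal. rewrite opt_exponent_defaulted, <- exp_plus by lia. f_equal. ring.
Qed.

(* [f] is a function of the atom that is H_t-measurable: constant on the atoms alive at t. *)
Lemma marginal_martingale_step x t f : (1 <= t < T)%nat ->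
  (forall k, (t < k)%nat -> f k = f (S t)) ->
  sumR 1 (S T) (fun k => atom_prob k * marginal x t k * f k)
  = sumR 1 (S T) (fun k => atom_prob k * marginal x (S t) k * f k).
Proof.
  intros Ht Hf. rewrite !(sumR_split 1 t (S T)) by lia. f_equal.
  { apply sumR_ext. intros k Hk. rewrite marginal_defaulted by lia. reflexivity. }
  set (K := exp (- (b 1 * x) - drift (S t))).
  rewrite (sumR_ext (S t) (S T) _ (fun k => (K * Rpower (h t) (b (S t)) * f (S t)) * atom_prob k))
    by (intros k ?; rewrite (Hf k), marginal_alive_next by lia; unfold K; ring).
  rewrite sumR_scal, sum_atom_prob_after, sumR_cons by lia.
  rewrite (sumR_ext (S (S t)) (S T) _
             (fun k => (K * Rpower (h (S t)) (b (S t)) * f (S t)) * atom_prob k))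
    by (intros; rewrite Hf, marginal_alive by lia; unfold K; ring).
  rewrite sumR_scal, sum_atom_prob_after, marginal_at_default by lia. fold K.
  transitivity (K * f (S t) * (Rpower (h t) (b (S t)) * survival t)); [ring|].
  rewrite hseq_survival by lia. ring.
Qed.

Lemma marginal_martingale x t f : (1 <= t <= T)%nat ->
  (forall k, (t < k)%nat -> f k = f (S t)) ->
  sumR 1 (S T) (fun k => atom_prob k * marginal x t k * f k)
  = sumR 1 (S T) (fun k => atom_prob k * marginal x T k * f k).
Proof.
  remember (T - t)%nat as n eqn:Hn. revert t Hn. induction n as [|n IH]; intros t Hn Ht Hf.
  - replace t with T by lia. reflexivity.
  - rewrite marginal_martingale_step by (auto; lia). apply IH; [lia | lia|].
    intros k Hk. rewrite Hf by lia. symmetry. apply Hf. lia.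
Qed.

Definition mean_marginal x := exp (- (b 1 * x)) * Rpower (h 0) (b 1).

Lemma expected_marginal_1 x : sumR 1 (S T) (fun k => atom_prob k * marginal x 1 k) = mean_marginal x.
Proof.
  assert (Hdrift1 : drift 1 = 0) by (apply sumR_nil; lia).
  rewrite sumR_cons by lia.
  rewrite (sumR_ext 2 (S T) _
             (fun k => (exp (- (b 1 * x) - drift 1) * Rpower (h 1) (b 1)) * atom_prob k))
    by (intros; rewrite marginal_alive by lia; ring).
  rewrite sumR_scal, (sum_atom_prob_after 1), marginal_at_default by lia.
  unfold mean_marginal. rewrite <- (Rmult_1_r (Rpower (h 0) (b 1))), <- survival_0.
  rewrite (hseq_survival 0), Hdrift1 by lia.
  replace (- (b 1 * x) - 0) with (- (b 1 * x)) by ring. ring.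
Qed.

Lemma expected_marginal x t : (1 <= t <= T)%nat ->
  sumR 1 (S T) (fun k => atom_prob k * marginal x t k) = mean_marginal x.
Proof.
  intros Ht. rewrite <- (expected_marginal_1 x).
  transitivity (sumR 1 (S T) (fun k => atom_prob k * marginal x t k * 1));
    [apply sumR_ext; intros; ring|].
  transitivity (sumR 1 (S T) (fun k => atom_prob k * marginal x 1 k * 1));
    [|apply sumR_ext; intros; ring].
  rewrite (marginal_martingale x t (fun _ => 1)), (marginal_martingale x 1 (fun _ => 1)) by (auto; lia).
  reflexivity.
Qed.

Lemma uexp_tangent t c y : (1 <= t <= T)%nat ->
  uexp alpha t y <= / alpha t * (1 - exp (- c)) + exp (- c) * (y - c / alpha t).
Proof.
  intros Ht. pose proof (Halpha t Ht) as Ha. unfold uexp.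
  set (E := exp (- c)). set (F := exp (c - alpha t * y)).
  assert (HE : 0 < E) by apply exp_pos.
  assert (HF : 1 + (c - alpha t * y) <= F) by apply exp_ineq1_le.
  replace (exp (- alpha t * y)) with (E * F) by (unfold E, F; rewrite <- exp_plus; f_equal; ring).
  assert (0 <= / alpha t * E * (F - (1 + (c - alpha t * y)))).
  { apply Rmult_le_pos; [apply Rmult_le_pos; [left; apply Rinv_0_lt_compat|]|]; lra. }
  replace (/ alpha t * (1 - E) + E * (y - c / alpha t))
    with (/ alpha t * (1 - E * F) + / alpha t * E * (F - (1 + (c - alpha t * y)))) by (field; lra).
  lra.
Qed.

(* The first-order term of the concavity bound vanishes: by the martingale property
   every marginal utility can be replaced by the last one, and then the budget
   constraint is used atom by atom. *)
Lemma first_order_term_zero x y :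
  (forall t k, (1 <= t <= T)%nat -> (t < k)%nat -> y t k = y t (S t)) ->
  (forall k, (1 <= k <= S T)%nat ->
     atom_prob k = 0 \/ sumR 1 T (fun t => y t k) = x - claim_path (atom_path k)) ->
  sumR 1 T (fun t => sumR 1 (S T)
    (fun k => atom_prob k * marginal x t k * (y t k - opt_exponent x t k / alpha t))) = 0.
Proof.
  intros Hadapted Hbudget.
  rewrite (sumR_ext 1 T _ (fun t => sumR 1 (S T)
    (fun k => atom_prob k * marginal x T k * (y t k - opt_exponent x t k / alpha t)))).
  2:{ intros t Ht. apply marginal_martingale; auto.
      intros k Hk. rewrite (Hadapted t k), !opt_exponent_alive by lia. reflexivity. }
  rewrite sumR_exch. apply sumR_zero. intros k Hk. rewrite sumR_scal.
  destruct (Hbudget k Hk) as [E|E]; [rewrite E; ring|].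
  rewrite (sumR_ext _ _ _ (fun t => y t k + (-1) * (/ alpha t * opt_exponent x t k)))
    by (intros; ring_div).
  rewrite sumR_plus, sumR_scal, E, opt_exponent_budget by auto. ring.
Qed.

Variable r : nat -> R.
Hypothesis Hr : forall t, (1 <= t <= T)%nat -> 0 <= r t.

Lemma Bacc_pos t : (t <= T)%nat -> 0 < Bacc r t.
Proof.
  induction t as [|t IH]; intros; simpl; [lra|].
  apply Rmult_lt_0_compat; [apply IH; lia|]. generalize (Hr (S t) ltac:(lia)); lra.
Qed.

Definition opt_strategy x : nat -> list bool -> R :=
  fun t hb => alloc_path r x (fun j => if nth j hb false then 1 else 0) t.

Lemma opt_strategy_atom x t k : (1 <= k)%nat ->
  opt_strategy x t (bucket_hist k t) = Bacc r t / alpha t * opt_exponent x t k.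
Proof.
  intros. unfold opt_strategy. rewrite <- alloc_atom_path by auto. apply alloc_path_ext.
  intros j Hj. rewrite nth_bucket_hist by auto. reflexivity.
Qed.

Lemma uexp_opt_strategy x t k : (1 <= t <= T)%nat -> (1 <= k)%nat ->
  uexp alpha t (opt_strategy x t (bucket_hist k t) / Bacc r t) = / alpha t * (1 - marginal x t k).
Proof.
  intros. rewrite opt_strategy_atom by auto. unfold uexp, marginal.
  assert (0 < Bacc r t) by (apply Bacc_pos; lia). assert (0 < alpha t) by (apply Halpha; lia).
  do 3 f_equal. field. split; lra.
Qed.

Definition opt_value x := tolerance 1 * (1 - mean_marginal x).

Lemma expected_utility_at_optimum x t : (1 <= t <= T)%nat ->
  sumR 1 (S T) (fun k => atom_prob k * (/ alpha t * (1 - marginal x t k)))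
  = / alpha t * (1 - mean_marginal x).
Proof.
  intros Ht.
  rewrite (sumR_ext _ _ _
             (fun k => / alpha t * atom_prob k + (- / alpha t) * (atom_prob k * marginal x t k)))
    by (intros; ring).
  rewrite sumR_plus, !sumR_scal, sum_atom_prob, expected_marginal by auto. ring.
Qed.

Lemma value_opt_strategy x : value PS tau T r alpha (opt_strategy x) = opt_value x.
Proof.
  unfold value, opt_value. rewrite <- sum_inv_alpha. apply sumR_ext. intros t Ht.
  rewrite <- expected_utility_at_optimum by auto. unfold Expect_hist. apply sumR_ext. intros k Hk.
  fold (atom_prob k). rewrite uexp_opt_strategy by (auto; lia). reflexivity.
Qed.

Lemma value_le_opt_value x g :
  (forall k, (1 <= k <= S T)%nat -> atom_prob k = 0 \/
     sumR 1 T (fun t => g t (bucket_hist k t) / Bacc r t) = x - claim_path (atom_path k)) ->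
  value PS tau T r alpha g <= opt_value x.
Proof.
  intros Hbudget. set (y := fun t k => g t (bucket_hist k t) / Bacc r t).
  apply Rle_trans with (sumR 1 T (fun t => sumR 1 (S T)
    (fun k => atom_prob k * (/ alpha t * (1 - marginal x t k))
              + atom_prob k * marginal x t k * (y t k - opt_exponent x t k / alpha t)))).
  - unfold value, Expect_hist. apply sumR_le. intros t Ht. apply sumR_le. intros k Hk.
    fold (atom_prob k).
    replace (atom_prob k * (/ alpha t * (1 - marginal x t k))
             + atom_prob k * marginal x t k * (y t k - opt_exponent x t k / alpha t))
      with (atom_prob k * (/ alpha t * (1 - marginal x t k)
                           + marginal x t k * (y t k - opt_exponent x t k / alpha t))) by ring.
    apply Rmult_le_compat_l; [apply atom_prob_nonneg | apply uexp_tangent; auto].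
  - rewrite (sumR_ext 1 T _ (fun t => / alpha t * (1 - mean_marginal x) + sumR 1 (S T)
      (fun k => atom_prob k * marginal x t k * (y t k - opt_exponent x t k / alpha t))))
      by (intros; rewrite sumR_plus, expected_utility_at_optimum by auto; reflexivity).
    rewrite sumR_plus, first_order_term_zero, sum_inv_alpha; [unfold opt_value; lra| |exact Hbudget].
    intros t k Ht Hk. unfold y. rewrite (bucket_hist_alive k (S t) t) by lia. reflexivity.
Qed.

Lemma exists_bucket w : exists k, (1 <= k <= S T)%nat /\ bucket tau T k w.
Proof.
  unfold bucket. destruct (Rle_dec (tau w) (INR T)) as [Hle|Hgt].
  - destruct (exists_integer_interval (tau w) T (Htau w) Hle) as [k [Hk Hint]].
    exists k. split; [lia|]. destruct (Nat.leb_spec k T); [exact Hint | lia].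
  - exists (S T). split; [lia|]. destruct (Nat.leb_spec (S T) T); [lia | lra].
Qed.

Lemma tau_le_INR_on_bucket w k s : (1 <= k <= S T)%nat -> bucket tau T k w -> (s <= T)%nat ->
  (tau w <= INR s <-> (k <= s)%nat).
Proof.
  intros Hk Hb Hs. unfold bucket in Hb. destruct (Nat.leb_spec k T).
  - split; intros Hks.
    + destruct (Nat.le_gt_cases k s); auto. assert (INR s <= INR (k - 1)) by (apply le_INR; lia). lra.
    + assert (INR k <= INR s) by (apply le_INR; lia). lra.
  - split; intros Hks; [|lia]. assert (INR s <= INR T) by (apply le_INR; lia). lra.
Qed.

Lemma Dind_on_bucket w k s : (1 <= k <= S T)%nat -> bucket tau T k w -> (s <= T)%nat ->
  Dind tau s w = atom_path k s.
Proof.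
  intros Hk Hb Hs. pose proof (tau_le_INR_on_bucket w k s Hk Hb Hs) as Hiff. unfold Dind, atom_path.
  destruct (Rle_dec (tau w) (INR s)) as [Hle|Hgt], (Nat.leb_spec k s); try reflexivity;
    exfalso; [apply Hiff in Hle | apply Hgt, Hiff]; lia.
Qed.

Lemma hist_on_bucket w k t : (1 <= k <= S T)%nat -> bucket tau T k w -> (t <= T)%nat ->
  hist tau t w = bucket_hist k t.
Proof.
  intros Hk Hb Ht. unfold hist, bucket_hist. apply map_ext_in. intros s Hs%in_seq.
  pose proof (tau_le_INR_on_bucket w k s Hk Hb ltac:(lia)) as Hiff.
  destruct (Rle_dec (tau w) (INR s)) as [Hle|Hgt], (Nat.leb_spec k s); try reflexivity;
    exfalso; [apply Hiff in Hle | apply Hgt, Hiff]; lia.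
Qed.

Lemma Zclaim_on_bucket w k : (1 <= k <= S T)%nat -> bucket tau T k w ->
  Zclaim tau T z w = claim_path (atom_path k).
Proof.
  intros. unfold Zclaim. fold (claim_path (fun j => Dind tau j w)).
  apply claim_path_ext. intros. apply Dind_on_bucket; auto.
Qed.

Lemma Xopt_opt_strategy w0 H t w :
  Xopt PS tau T r alpha z w0 H t w = opt_strategy (w0 + H) t (hist tau t w).
Proof.
  change (alloc_path r (w0 + H) (fun j => Dind tau j w) t = opt_strategy (w0 + H) t (hist tau t w)).
  apply alloc_path_ext. intros j Hj. rewrite nth_hist by auto. unfold Dind.
  destruct (Rle_dec (tau w) (INR j)); reflexivity.
Qed.

Lemma opt_strategy_budget x w :
  sumR 1 T (fun t => opt_strategy x t (hist tau t w) / Bacc r t) = x - Zclaim tau T z w.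
Proof.
  destruct (exists_bucket w) as [k [Hk Hb]].
  rewrite (Zclaim_on_bucket w k), <- opt_exponent_budget by auto.
  apply sumR_ext. intros t Ht. rewrite (hist_on_bucket w k t), opt_strategy_atom by (auto; lia).
  assert (0 < Bacc r t) by (apply Bacc_pos; lia). assert (0 < alpha t) by (apply Halpha; auto).
  field. split; lra.
Qed.

(* An allocation violating the budget on an atom of positive probability violates it
   on a non-null event, so every allocation in A(x - Z) falls under [value_le_opt_value]. *)
Lemma U_is_opt_value x W : (forall w, W w = x - Zclaim tau T z w) ->
  U_is PS tau T r alpha W (opt_value x).
Proof.
  intros HW. split.
  - intros v [g [[N [HN [HN0 HNc]]] ->]]. apply value_le_opt_value. intros k Hk.
    set (y := fun t => g t (bucket_hist k t) / Bacc r t).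
    destruct (classic (sumR 1 T y = x - claim_path (atom_path k))) as [E|E]; [now right | left].
    assert (atom_prob k <= Prob PS N).
    { apply Prob_mono; auto; [apply Fsig_bucket|]. intros w Hw. apply NNPP. intros HNw. apply E.
      rewrite <- (Zclaim_on_bucket w k Hk Hw), <- HW, <- (HNc w HNw). apply sumR_ext. intros t Ht.
      rewrite (hist_on_bucket w k t) by (auto; lia). reflexivity. }
    pose proof (atom_prob_nonneg k). lra.
  - intros M HM. rewrite <- value_opt_strategy. apply HM. exists (opt_strategy x). split; [|reflexivity].
    apply almost_surely_everywhere. intros w. rewrite opt_strategy_budget, HW. reflexivity.
Qed.

End Allocation.

Lemma hseq_zero_claim PS tau T alpha t : hseq PS tau T alpha (fun _ => 0) t = 1.
Proof.
  unfold hseq. induction (T - t)%nat as [|n IH]; simpl; [apply exp_0|].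
  rewrite IH, Rmult_0_r, exp_0. unfold pt, Rpower. rewrite ln_1, Rmult_0_r, exp_0.
  replace (1 * qt PS tau (T - n - 1) + 1 * (1 - qt PS tau (T - n - 1))) with 1 by ring.
  rewrite ln_1, Rmult_0_r. apply exp_0.
Qed.

Lemma Zclaim_zero_claim {O} (tau : O -> R) T w : Zclaim tau T (fun _ => 0) w = 0.
Proof. unfold Zclaim. rewrite sumR_zero by (intros; ring). ring. Qed.

Lemma opt_value_indifference PS tau T alpha z w0 c : (1 <= T)%nat ->
  (forall t, (1 <= t <= T)%nat -> 0 < alpha t) ->
  opt_value PS tau T alpha z (w0 + c) = opt_value PS tau T alpha (fun _ => 0) w0
  <-> c = ln (hseq PS tau T alpha z 0).
Proof.
  intros HT Halpha. unfold opt_value, mean_marginal. rewrite hseq_zero_claim.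
  assert (Htol := tolerance_pos T alpha HT Halpha 1 ltac:(lia)).
  set (b1 := beta T alpha 1). set (h0 := hseq PS tau T alpha z 0).
  assert (Hb : 0 < b1) by exact (beta_pos T alpha HT Halpha 1 ltac:(lia)).
  assert (Hh0 : 0 < h0) by apply hseq_pos.
  clearbody b1 h0.
  assert (Eexp : exp (- (b1 * (w0 + c))) * Rpower h0 b1 = exp (- (b1 * w0) + b1 * (ln h0 - c))).
  { unfold Rpower. rewrite <- exp_plus. f_equal. ring. }
  rewrite Eexp. unfold Rpower. rewrite ln_1, Rmult_0_r, exp_0, Rmult_1_r.
  split; intros E.
  - assert (Heq : exp (- (b1 * w0) + b1 * (ln h0 - c)) = exp (- (b1 * w0))).
    { apply Rmult_eq_reg_l with (tolerance T alpha 1); lra. }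
    apply exp_inv in Heq.
    assert (Hprod : b1 * (ln h0 - c) = 0) by lra.
    destruct (Rmult_integral _ _ Hprod); lra.
  - rewrite E. replace (ln h0 - ln h0) with 0 by ring. rewrite Rmult_0_r, Rplus_0_r. reflexivity.
Qed.

Theorem theorem4p3 (PS : ProbSpace) (tau : Omega PS -> R) (T : nat)
    (r alpha z : nat -> R) (w0 : R) :
  (1 <= T)%nat ->
  (forall a, Fsig PS (fun w => tau w <= a)) ->
  (forall w, 0 < tau w) ->
  (forall s, 0 <= s -> Prob PS (fun w => tau w = s) = 0) ->
  (forall t, (1 <= t <= T)%nat -> 0 <= r t) ->
  (forall t, (1 <= t <= T)%nat -> 0 < alpha t) ->
  (* (a) H(Z) = log h_0 : log h_0 is the unique c with U(w+c-Z) = U(w) *)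
  (forall c : R,
     (exists u, U_is PS tau T r alpha (fun w => w0 + c - Zclaim tau T z w) u
                /\ U_is PS tau T r alpha (fun _ => w0) u)
     <-> c = ln (hseq PS tau T alpha z 0))
  /\
  (* (b) the process Xopt is adapted, lies in A(w+H(Z)-Z), and is optimal,
         its value being U(w+H(Z)-Z) = U(w) *)
  (let H := ln (hseq PS tau T alpha z 0) in
   let W := fun w => w0 + H - Zclaim tau T z w in
   exists g : nat -> list bool -> R,
     (forall t w, (1 <= t <= T)%nat ->
        Xopt PS tau T r alpha z w0 H t w = g t (hist tau t w))
     /\ almost_surely PS
          (fun w => sumR 1 T (fun t => Xopt PS tau T r alpha z w0 H t w / Bacc r t) = W w)
     /\ U_is PS tau T r alpha W (value PS tau T r alpha g)
     /\ U_is PS tau T r alpha (fun _ => w0) (value PS tau T r alpha g)).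
Proof.
  (* Buckets are half-open. *)
  intros HT Hmeas Htau _ Hr Halpha.
  assert (U_wealth : U_is PS tau T r alpha (fun _ => w0) (opt_value PS tau T alpha (fun _ => 0) w0)).
  { apply U_is_opt_value; auto. intros w. rewrite Zclaim_zero_claim. ring. }
  assert (U_claim : forall c, U_is PS tau T r alpha (fun w => w0 + c - Zclaim tau T z w)
                                (opt_value PS tau T alpha z (w0 + c)))
    by (intros; apply U_is_opt_value; auto; intros; ring).
  split.
  - intros c. rewrite <- opt_value_indifference by auto. split.
    + intros [u [Hc H0]]. rewrite (is_lub_u _ _ _ (U_claim c) Hc). exact (is_lub_u _ _ _ H0 U_wealth).
    + intros E. exists (opt_value PS tau T alpha z (w0 + c)).
      split; [apply U_claim | rewrite E; exact U_wealth].
  - intros H W. exists (opt_strategy PS tau T alpha z r (w0 + H)).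
    rewrite value_opt_strategy by auto. split; [|split; [|split]].
    + intros t w _. apply Xopt_opt_strategy.
    + apply almost_surely_everywhere. intros w. unfold W.
      rewrite <- (opt_strategy_budget PS tau T alpha z HT Halpha Htau r Hr). apply sumR_ext.
      intros t _. rewrite Xopt_opt_strategy. reflexivity.
    + apply U_claim.
    + rewrite (proj2 (opt_value_indifference PS tau T alpha z w0 H HT Halpha) eq_refl).
      exact U_wealth.
Qed.
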